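(* Let $(L,\vee,\wedge,0,1)$ be a complemented lattice with $0\ne1$ and $a\in L$. Then the following are equivalent: (i) for all $x\in L$: $a\to x=\{1\}$ if and only if $a\le x$; (ii) $a$ is a minimal element of $a^{++}$.
   Context: For $a\in L$, $a^+:=\{x\in L\mid a\vee x=1,\ a\wedge x=0\}$ (the set of all complements of $a$); for $A\subseteq L$, $A^+:=\{x\in L\mid a\vee x=1\text{ and }a\wedge x=0\text{ for all }a\in A\}$, and $a^{++}:=(a^+)^+$. For $a,b\in L$, $a\to b:=\{x\vee(a\wedge b)\mid x\in a^+\}$. *)

From mathcomp Require Import all_boot all_order.
Set Implicit Arguments. Unset Strict Implicit. Unset Printing Implicit Defensive.
Import Order.TTheory.
Local Open Scope order_scope.

(* Bounded lattice L (0 = \bot, 1 = \top); subsets of L are predicates L -> Prop. *)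
Section Defs.
Context {disp : Order.disp_t} {L : tbLatticeType disp}.

Definition complemented : Prop :=
  forall a : L, exists b : L, a `|` b = \top /\ a `&` b = \bot.

Definition compl_set (a : L) : L -> Prop :=
  fun x => a `|` x = \top /\ a `&` x = \bot.

Definition compl_setS (A : L -> Prop) : L -> Prop :=
  fun x => forall a, A a -> a `|` x = \top /\ a `&` x = \bot.

Definition compl2 (a : L) : L -> Prop := compl_setS (compl_set a).

Definition arrow (a b : L) : L -> Prop :=
  fun y => exists2 x, compl_set a x & y = x `|` (a `&` b).

Definition is_top_singleton (A : L -> Prop) : Prop :=
  forall y, A y <-> y = \top.

Definition minimal_in (A : L -> Prop) (a : L) : Prop :=
  A a /\ forall y, A y -> y <= a -> y = a.
End Defs.

From mathcomp Require Import all_boot all_order.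
Import Order.TTheory.
Local Open Scope order_scope.

(* Since a /\ c = 0 for every complement c of a, the element a /\ x lies in a^{++}
   exactly when c \/ (a /\ x) = 1 for all c in a^+, i.e. exactly when a -> x = {1}
   (a^+ being nonempty).  Condition (i) thus reads "a /\ x is in a^{++} iff a <= x",
   which for any subset P of L says precisely that a is minimal in P, since the
   elements below a are exactly the a /\ x. *)

Section BoundedLattice.
Context {disp : Order.disp_t} {L : tbLatticeType disp}.

Lemma arrow_top_singletonE (a x : L) :
  (exists c, compl_set a c) ->
  is_top_singleton (arrow a x) <-> compl2 a (a `&` x).
Proof.
move=> [c0 ac0]; split=> [arrow_top c ac | ax_compl2 y].
- split; first by apply/(arrow_top _).1; exists c.
  by rewrite meetA (meetC c) ac.2 meet0x.
- split=> [[c ac ->] | ->]; first by case: (ax_compl2 c ac).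
  by exists c0; case: (ax_compl2 c0 ac0).
Qed.

Lemma minimal_in_meetP (P : L -> Prop) (a : L) :
  (forall x, P (a `&` x) <-> a <= x) <-> minimal_in P a.
Proof.
split=> [Pmeet | [Pa a_min] x].
- split; first by rewrite -[a]meetxx; apply/(Pmeet a).2.
  move=> y Py ya; apply/le_anti; rewrite ya; apply/(Pmeet y).1.
  by rewrite (meet_idPr ya).
- split=> [Pax | ax]; last by rewrite (meet_idPl ax).
  by rewrite -(a_min _ Pax (leIl a x)) leIr.
Qed.

End BoundedLattice.

Theorem proposition4 (disp : Order.disp_t) (L : tbLatticeType disp)
  (hC : @complemented disp L) (h01 : (\bot : L) <> \top) (a : L) :
  (forall x : L, is_top_singleton (arrow a x) <-> a <= x) <->
  minimal_in (compl2 a) a.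
Proof.
have arrowE x := arrow_top_singletonE a x (hC a).
apply: iff_trans (minimal_in_meetP _ a).
split=> equiv_le x; first exact: iff_trans (iff_sym (arrowE x)) (equiv_le x).
exact: iff_trans (arrowE x) (equiv_le x).
Qed.
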